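(* In the NBR+ scheme described in the context, the number of nodes that are retired but not yet reclaimed is bounded (in every execution, including executions in which threads are delayed or crash).
   Context: Setting: an asynchronous shared-memory system with a fixed number $p$ of threads operating on a linked concurrent data structure; each unlinked node is retired by exactly one thread. Each operation reserves at most $k$ nodes, where $k$ is much smaller than the limbo bag threshold. Base mechanism (as in NBR): each thread has a private limbo bag, a thread-local flag restartable, and a row of a shared reservations array; read phases start from an entry point and only read, with restartable set true at their start (after clearing reservations); write phases are entered after reserving all nodes to be accessed there and setting restartable false, and access only reserved nodes; a neutralizing signal makes a thread with restartable true discard its private references and restart from its checkpoint, and is ignored otherwise. NBR+ retire procedure: each thread has a shared counter announceTS and two limbo-bag-size thresholds LoWatermark < HiWatermark $= h$. When retiring a node, if the limbo bag is at the HiWatermark the thread increments its announceTS, signals every other thread, increments its announceTS again, and frees every unreserved node in its limbo bag; otherwise, if the limbo bag is at or above the LoWatermark, on first entry it bookmarks its current last retired node and records all threads' announceTS values, and thereafter if some other thread's announceTS has increased by at least 2 since recording, it frees all unreserved nodes of its limbo bag up to the bookmark. The retired node is then appended to the limbo bag. Signals are assumed to be handled by the recipient before it takes any further step once the sender finishes sending. *)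

From mathcomp Require Import all_boot.
Set Implicit Arguments. Unset Strict Implicit. Unset Printing Implicit Defensive.

Section NBRplus.
Variable p : nat.
Variable k : nat.     (* max number of reservations per operation *)
Variable lo : nat.
Variable h : nat.

(* Local state of a thread, together with its row of shared variables. *)
Record tstate := TState {
  bag : seq nat;
  resv : seq nat;                             (* row of the reservations array *)
  restartable : bool;
  announceTS : nat;
  lowm : option (nat * ('I_p -> nat));        (* LoWatermark bookmark:
      (number of nodes in the bag when bookmarked, i.e. the bag prefix ending
       at the bookmarked last retired node; recorded announceTS values) *)
  pending : option (nat * seq 'I_p);          (* inside the HiWatermark branch of
      retire(x): node x, threads still to be signalled *)
  neutralized : bool                          (* received a neutralizing signal
      while restartable: must restart from its checkpoint (a new read phase) *)
}.

Record gstate := GState {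
  th : 'I_p -> tstate;
  retired : seq nat;   (* ghost: nodes whose retire has been invoked *)
  freed : seq nat      (* ghost: nodes that have been reclaimed (freed) *)
}.

Definition upd (A : Type) (f : 'I_p -> A) (i : 'I_p) (v : A) : 'I_p -> A :=
  fun j => if j == i then v else f j.

Definition set_bag t b := TState b (resv t) (restartable t) (announceTS t) (lowm t) (pending t) (neutralized t).
Definition set_resv t r := TState (bag t) r (restartable t) (announceTS t) (lowm t) (pending t) (neutralized t).
Definition set_rst t r := TState (bag t) (resv t) r (announceTS t) (lowm t) (pending t) (neutralized t).
Definition set_ats t a := TState (bag t) (resv t) (restartable t) a (lowm t) (pending t) (neutralized t).
Definition set_lowm t l := TState (bag t) (resv t) (restartable t) (announceTS t) l (pending t) (neutralized t).
Definition set_pending t q := TState (bag t) (resv t) (restartable t) (announceTS t) (lowm t) q (neutralized t).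
Definition set_neut t n := TState (bag t) (resv t) (restartable t) (announceTS t) (lowm t) (pending t) n.

Definition reserved (s : gstate) (x : nat) : bool :=
  [exists j : 'I_p, x \in resv (th s j)].

Inductive action :=
  | BeginRead            (* start a read phase (from the entry point / checkpoint):
                            clear own reservations, set restartable true *)
  | Reserve of seq nat
  | EnterWrite
  | Retire of nat        (* invoke retire on an unlinked node *)
  | Continue.            (* next step of an ongoing HiWatermark retire *)

Definition step (s : gstate) (i : 'I_p) (a : action) : option gstate :=
  let t := th s i in
  let put t' := upd (th s) i t' in
  match pending t, a with
  | None, BeginRead =>
      Some (GState (put (set_neut (set_rst (set_resv t [::]) true) false))
                   (retired s) (freed s))
  | None, Reserve r =>
      if restartable t && ~~ neutralized t && (size r <= k) then
        Some (GState (put (set_resv t r)) (retired s) (freed s))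
      else None
  | None, EnterWrite =>
      if restartable t && ~~ neutralized t then
        Some (GState (put (set_rst t false)) (retired s) (freed s))
      else None
  | None, Retire x =>
      if restartable t || (x \in retired s) then None else
      let ret' := x :: retired s in
      if h <= size (bag t) then
        (* HiWatermark: increment announceTS, then signal the others *)
        Some (GState (put (set_pending (set_ats t (announceTS t).+1)
                                       (Some (x, [seq j <- enum 'I_p | j != i]))))
                     ret' (freed s))
      else if lo <= size (bag t) then
        match lowm t with
        | None =>
            (* first entry: bookmark and record all announceTS values *)
            Some (GState (put (set_bag (set_lowm t
                      (Some (size (bag t), fun j => announceTS (th s j))))
                      (rcons (bag t) x))) ret' (freed s))
        | Some (n, rec) =>
            if [exists j : 'I_p, (j != i) && (rec j + 2 <= announceTS (th s j))] then
              let pre := take n (bag t) in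
              let keep := [seq y <- pre | reserved s y] ++ drop n (bag t) in
              Some (GState (put (set_lowm (set_bag t (rcons keep x)) None))
                           ret' ([seq y <- pre | ~~ reserved s y] ++ freed s))
            else
              Some (GState (put (set_bag t (rcons (bag t) x))) ret' (freed s))
        end
      else
        Some (GState (put (set_bag t (rcons (bag t) x))) ret' (freed s))
  | Some (x, j :: rest), Continue =>
      (* send a neutralizing signal to j; handled by j immediately *)
      let tj := th s j in
      let th1 := if restartable tj then upd (th s) j (set_neut tj true) else th s in
      Some (GState (upd th1 i (set_pending (th1 i) (Some (x, rest))))
                   (retired s) (freed s))
  | Some (x, [::]), Continue =>
      let keep := [seq y <- bag t | reserved s y] in
      Some (GState (put (set_pending (set_lowm (set_bag (set_ats t (announceTS t).+1)
                                                 (rcons keep x)) None) None))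
                   (retired s) ([seq y <- bag t | ~~ reserved s y] ++ freed s))
  | _, _ => None
  end.

Definition init_tstate : tstate := TState [::] [::] false 0 None None false.
Definition init_gstate : gstate := GState (fun _ => init_tstate) [::] [::].

(* States reached by some finite execution (arbitrary interleaving; threads
   may be delayed arbitrarily or stop taking steps forever, i.e. crash). *)
Inductive reachable : gstate -> Prop :=
  | reach_init : reachable init_gstate
  | reach_step s i a s' : reachable s -> step s i a = Some s' -> reachable s'.

Definition unreclaimed (s : gstate) : nat :=
  size [seq x <- retired s | x \notin freed s].

End NBRplus.

From mathcomp Require Import all_boot.
Set Implicit Arguments. Unset Strict Implicit. Unset Printing Implicit Defensive.

(* Every retired but unreclaimed node sits in the limbo bag of some thread (or
   is the node that thread is retiring in the HiWatermark branch), so it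
   suffices to bound each limbo bag.  A bag grows only while it is below h;
   once it reaches h, the next retire frees every unreserved node of the bag,
   and at most p * k nodes are reserved at any time.  Hence no bag exceeds
   max(h, p k + 1), and at most p (max(h, p k + 1) + 1) nodes are unreclaimed. *)

Lemma uniq_cover_size_leq (I : finType) (T : eqType) (f : I -> seq T) c (s : seq T) :
  uniq s -> (forall i, size (f i) <= c) -> (forall y, y \in s -> exists i, y \in f i) ->
  size s <= #|I| * c.
Proof.
move=> Us f_small s_cov.
have cover : {subset s <= flatten [seq f i | i <- enum I]}.
  move=> y /s_cov [i yi]; apply/flattenP; exists (f i) => //.
  by apply: map_f; rewrite mem_enum.
apply: leq_trans (uniq_leq_size Us cover) _.
rewrite size_flatten sumnE /shape -map_comp big_map big_enum /= -sum_nat_const.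
exact: leq_sum.
Qed.

Section Invariant.
Variables p k lo h : nat.

Definition bag_bound := maxn h (p * k).+1.

Definition limbo_nodes (t : tstate p) : seq nat :=
  bag t ++ (if pending t is Some (x, _) then [:: x] else [::]).

Record thread_inv (ret : seq nat) (t : tstate p) : Prop := ThreadInv {
  resv_small : size (resv t) <= k;
  limbo_uniq : uniq (limbo_nodes t);
  limbo_retired : {subset limbo_nodes t <= ret};
  bag_small : size (bag t) <= bag_bound }.

Record nbr_inv (s : gstate p) : Prop := NbrInv {
  retired_uniq : uniq (retired s);
  threads_inv : forall j, thread_inv (retired s) (th s j);
  unreclaimed_in_limbo : forall y, y \in retired s -> y \notin freed s ->
    exists j, y \in limbo_nodes (th s j) }.

Lemma limbo_nodes_idle (t : tstate p) : pending t = None -> limbo_nodes t = bag t.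
Proof. by rewrite /limbo_nodes => ->; rewrite cats0. Qed.

Lemma size_limbo_nodes ret t : thread_inv ret t -> size (limbo_nodes t) <= bag_bound.+1.
Proof.
case=> _ _ _ bag_t; rewrite /limbo_nodes size_cat.
by case: (pending t) => [[x l]|]; rewrite ?addn1 ?addn0 ?ltnS // ltnW.
Qed.

Lemma bag_uniq ret t : thread_inv ret t -> uniq (bag t).
Proof. by case=> _ + _ _; rewrite cat_uniq => /andP []. Qed.

Lemma thread_inv_mono ret ret' t :
  {subset ret <= ret'} -> thread_inv ret t -> thread_inv ret' t.
Proof. by move=> sub [? ? lr ?]; split=> // y /lr /sub. Qed.

Lemma size_reserved (s : gstate p) (b : seq nat) :
  (forall j, size (resv (th s j)) <= k) -> uniq b ->
  size [seq y <- b | reserved s y] <= p * k.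
Proof.
move=> resv_k Ub; rewrite -[p in p * k]card_ord.
apply: uniq_cover_size_leq (filter_uniq _ Ub) resv_k _ => y.
by rewrite mem_filter => /andP [/existsP].
Qed.

Lemma nbr_inv_update (s : gstate p) i t' R F :
  nbr_inv s -> uniq (R ++ retired s) ->
  size (resv t') <= k -> size (bag t') <= bag_bound ->
  subseq (limbo_nodes t') (limbo_nodes (th s i) ++ R) ->
  {subset R <= limbo_nodes t'} ->
  {in limbo_nodes (th s i), forall y, y \notin F -> y \in limbo_nodes t'} ->
  nbr_inv (GState (upd (th s) i t') (R ++ retired s) (F ++ freed s)).
Proof.
move=> [Uret Th Cov] UR resv' bag' sub' R_in keep'.
have [_ Ul Sl _] := Th i.
have to_ret : {subset limbo_nodes (th s i) ++ R <= R ++ retired s}.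
  by move=> y; rewrite mem_cat => /orP [/Sl yr | yR]; rewrite mem_cat ?yr ?yR ?orbT.
split=> //= [j|y].
- rewrite /upd; case: eqP => _; last first.
    by apply: thread_inv_mono (Th j) => y yr; rewrite mem_cat yr orbT.
  split=> // [|y /(mem_subseq sub')]; last exact: to_ret.
  apply: subseq_uniq sub' _; rewrite cat_uniq Ul.
  move: UR; rewrite cat_uniq => /and3P [-> disj _]; rewrite andbT.
  by apply: contra disj => /hasP [y yR /Sl yr]; apply/hasP; exists y.
- rewrite !mem_cat negb_or => /orP [yR | yr] /andP [yF yf].
    by exists i; rewrite /upd eqxx; apply: R_in.
  have [j yj] := Cov y yr yf; exists j; rewrite /upd.
  by case: eqP => [eji | //]; apply: keep' => //; rewrite -eji.
Qed.

Lemma nbr_inv_local (s : gstate p) i t' :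
  nbr_inv s -> limbo_nodes t' = limbo_nodes (th s i) ->
  size (bag t') <= bag_bound -> size (resv t') <= k ->
  nbr_inv (GState (upd (th s) i t') (retired s) (freed s)).
Proof.
move=> I limbo' bag' resv'.
apply: (@nbr_inv_update s i t' [::] [::]) => //; first exact: retired_uniq.
- by rewrite limbo' cats0.
- by move=> y; rewrite limbo'.
Qed.

Lemma nbr_inv_append (s : gstate p) i t' y :
  nbr_inv s -> y \notin retired s -> pending (th s i) = None ->
  limbo_nodes t' = rcons (bag (th s i)) y ->
  size (bag t') <= bag_bound -> resv t' = resv (th s i) ->
  nbr_inv (GState (upd (th s) i t') (y :: retired s) (freed s)).
Proof.
move=> I yr pend limbo' bag' resv'.
have limbo := limbo_nodes_idle pend.
apply: (@nbr_inv_update s i t' [:: y] [::]) => //.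
- by rewrite /= yr; exact: retired_uniq.
- by rewrite resv'; case: (threads_inv I i).
- by rewrite limbo' limbo cats1.
- by move=> z; rewrite inE limbo' => /eqP ->; rewrite mem_rcons mem_head.
- by move=> z; rewrite limbo limbo' mem_rcons inE => ->; rewrite orbT.
Qed.

Lemma nbr_inv_signal (s : gstate p) i j x rest :
  nbr_inv s -> pending (th s i) = Some (x, j :: rest) ->
  let th1 := if restartable (th s j) then upd (th s) j (set_neut (th s j) true)
             else th s in
  nbr_inv (GState (upd th1 i (set_pending (th1 i) (Some (x, rest))))
                  (retired s) (freed s)).
Proof.
move=> I pend th1.
have same_i : limbo_nodes (th1 i) = limbo_nodes (th s i) /\ bag (th1 i) = bag (th s i)
              /\ resv (th1 i) = resv (th s i).
  by rewrite /th1; case: ifP => // _; rewrite /upd; case: eqP => [->|].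
have I1 : nbr_inv (GState th1 (retired s) (freed s)).
  rewrite /th1; case: ifP => _; last by case: s I {pend th1 same_i}.
  by have [? _ _ ?] := threads_inv I j; apply: (nbr_inv_local (i := j) I).
have [limbo1 [bag1 resv1]] := same_i; have [resv_i _ _ bag_i] := threads_inv I i.
apply: (nbr_inv_local I1) => /=.
- by rewrite limbo1 /limbo_nodes /= -bag1 pend.
- by rewrite bag1.
- by rewrite resv1.
Qed.

Lemma nbr_inv_free_all (s : gstate p) i x :
  nbr_inv s -> pending (th s i) = Some (x, [::]) ->
  let t := th s i in
  nbr_inv (GState (upd (th s) i
             (set_pending (set_lowm (set_bag (set_ats t (announceTS t).+1)
                           (rcons [seq y <- bag t | reserved s y] x)) None) None))
           (retired s) ([seq y <- bag t | ~~ reserved s y] ++ freed s)).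
Proof.
move=> I pend t; have Ti := threads_inv I i.
have limbo : limbo_nodes t = rcons (bag t) x by rewrite /limbo_nodes pend cats1.
apply: (@nbr_inv_update s i _ [::] _ I) => //=.
- exact: retired_uniq.
- exact: resv_small Ti.
- rewrite size_rcons (leq_trans _ (leq_maxr _ _)) // ltnS.
  by apply: size_reserved (bag_uniq Ti) => j; case: (threads_inv I j).
- rewrite -/t limbo /limbo_nodes /= !cats0 -!cats1.
  exact: cat_subseq (filter_subseq _ _) (subseq_refl _).
- move=> y; rewrite -/t limbo /limbo_nodes /= cats0 !mem_rcons !inE mem_filter.
  by case/orP => [-> // | yb]; rewrite mem_filter yb andbT negbK => ->; rewrite orbT.
Qed.

Lemma nbr_inv_free_prefix (s : gstate p) i y n :
  nbr_inv s -> y \notin retired s -> pending (th s i) = None ->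
  size (bag (th s i)) < h ->
  let t := th s i in
  let pre := take n (bag t) in
  nbr_inv (GState (upd (th s) i (set_lowm (set_bag t
             (rcons ([seq z <- pre | reserved s z] ++ drop n (bag t)) y)) None))
           (y :: retired s) ([seq z <- pre | ~~ reserved s z] ++ freed s)).
Proof.
move=> I yr pend small t pre.
set keep := _ ++ drop n _.
have keep_sub : subseq keep (bag t).
  by rewrite -(cat_take_drop n (bag t)); apply: cat_subseq (filter_subseq _ _) _.
apply: (@nbr_inv_update s i _ [:: y] _ I) => /=.
- by rewrite yr; exact: retired_uniq.
- by case: (threads_inv I i).
- rewrite size_rcons (leq_trans _ (leq_maxl _ _)) //.
  exact: leq_ltn_trans (size_subseq keep_sub) small.
- by rewrite -/t !limbo_nodes_idle // -!cats1; apply: cat_subseq.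
- by move=> z; rewrite inE limbo_nodes_idle // => /eqP ->; rewrite mem_rcons mem_head.
- move=> z; rewrite -/t !limbo_nodes_idle // mem_rcons inE mem_cat.
  rewrite -{1}(cat_take_drop n (bag t)) mem_cat -/pre => /orP [zpre | ->];
    last by rewrite !orbT.
  by rewrite !mem_filter zpre !andbT negbK => ->; rewrite orbT.
Qed.

Lemma step_nbr_inv (s s' : gstate p) i a :
  nbr_inv s -> step k lo h s i a = Some s' -> nbr_inv s'.
Proof.
move=> I; have [_ Th _] := I; have [_ _ _ bag_i] := Th i.
rewrite /step; case pend: (pending (th s i)) => [[x [|j rest]]|];
  case: a => [|r||y|] //=.
- by case=> <-; exact: nbr_inv_free_all.
- by case=> <-; exact: nbr_inv_signal.
- by case=> <-; apply: nbr_inv_local.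
- by case: ifP => // /andP [_ r_small] [<-]; apply: nbr_inv_local.
- by case: ifP => // _ [<-]; apply: nbr_inv_local => //; case: (Th i).
- case: ifP => // /norP [_ yr].
  case: leqP => [_ | small].
    by case=> <-; apply: nbr_inv_append => //; rewrite /limbo_nodes cats1.
  have grow : size (rcons (bag (th s i)) y) <= bag_bound.
    by rewrite size_rcons (leq_trans small (leq_maxl _ _)).
  have append t' : pending t' = None -> bag t' = rcons (bag (th s i)) y ->
      resv t' = resv (th s i) ->
      nbr_inv (GState (upd (th s) i t') (y :: retired s) (freed s)).
    move=> pend' bag' resv'; apply: nbr_inv_append; rewrite ?bag' //.
    by rewrite limbo_nodes_idle.
  case: ifP => _; last by case=> <-; apply: append.
  case: (lowm _) => [[n rec]|]; last by case=> <-; apply: append.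
  by case: ifP => _ [<-]; [apply: nbr_inv_free_prefix | apply: append].
Qed.

Lemma reachable_nbr_inv (s : gstate p) : reachable k lo h s -> nbr_inv s.
Proof.
elim=> [|s0 i a s1 _ I0 /(step_nbr_inv I0) //].
by split=> //= j; split.
Qed.

End Invariant.

(* The bag bound max(h, p k + 1) holds for all watermarks and reservation
   limits. *)
Theorem lemma10 (p k lo h : nat) (Hlh : lo < h) (Hk : k < h) :
  exists B : nat, forall s : gstate p,
    reachable k lo h s -> unreclaimed s <= B.
Proof.
exists (p * (bag_bound p k h).+1) => s /reachable_nbr_inv [Uret Th Cov].
rewrite /unreclaimed -[p in p * _]card_ord.
apply: (uniq_cover_size_leq (f := fun j => limbo_nodes (th s j))) (filter_uniq _ Uret) _ _.
- by move=> j; apply: size_limbo_nodes (Th j).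
- by move=> y; rewrite mem_filter => /andP [yf yr]; exact: Cov.
Qed.
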